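(* Let $t\le 1/2$ be a positive rational number. If $G$ is a minimally $t$-tough chordal graph, then every simplicial vertex of $G$ has degree $1$.
   Context: All graphs are finite, simple and undirected. A graph is chordal if it contains no induced cycle of length at least $4$. A vertex $v$ is simplicial if its neighborhood $N(v)$ forms a clique. $\omega(H)$ denotes the number of components of $H$. A cutset of $G$ is a vertex set $S$ with $G-S$ disconnected. For positive real $t$, $G$ is $t$-tough if $\omega(G-S)\le |S|/t$ for every cutset $S$; the toughness $\tau(G)$ is the largest such $t$, with $\tau(K_n)=\infty$ for all $n\ge1$. $G$ is minimally $t$-tough if $\tau(G)=t$ and $\tau(G-e)<t$ for every edge $e$ of $G$. *)

From HB Require Import structures.
From mathcomp Require Import all_boot all_order all_algebra.
Set Implicit Arguments. Unset Strict Implicit. Unset Printing Implicit Defensive.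
Import Order.TTheory GRing.Theory Num.Theory.

Section Graphs.
Variable T : finType.

Definition simple_graph (g : rel T) : Prop := symmetric g /\ irreflexive g.

Definition induced (g : rel T) (A : {set T}) : rel T :=
  [rel x y | [&& x \in A, y \in A & g x y]].

Definition ncomp (g : rel T) (A : {set T}) : nat :=
  #|[set [set y in A | connect (induced g A) x y] | x in A]|.

Definition ncomp_del (g : rel T) (S : {set T}) : nat := ncomp g (~: S).

Definition cutset (g : rel T) (S : {set T}) : bool := 1 < ncomp_del g S.

(* G is t-tough: omega(G-S) <= |S|/t for every cutset S, i.e. t*omega <= |S| *)
Definition t_tough (g : rel T) (t : rat) : Prop :=
  forall S : {set T}, cutset g S -> (t * (ncomp_del g S)%:R <= (#|S|)%:R)%R.

(* tau(G) = t : t is the largest value for which G is t-tough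
   (for complete graphs no such value exists: tau = infinity) *)
Definition toughness_is (g : rel T) (t : rat) : Prop :=
  t_tough g t /\ forall t' : rat, (0 < t')%R -> t_tough g t' -> (t' <= t)%R.

Definition del_edge (g : rel T) (u v : T) : rel T :=
  [rel x y | g x y && ~~ (((x == u) && (y == v)) || ((x == v) && (y == u)))].

Definition minimally_tough (g : rel T) (t : rat) : Prop :=
  toughness_is g t /\
  forall u v : T, g u v ->
    exists t' : rat, toughness_is (del_edge g u v) t' /\ (t' < t)%R.

Definition cyc_adj (n : nat) (i j : 'I_n) : bool :=
  (j == i.+1 %% n :> nat) || (i == j.+1 %% n :> nat).

(* chordal: no induced cycle of length at least 4 *)
Definition chordal (g : rel T) : Prop :=
  forall (n : nat) (f : 'I_n -> T), 4 <= n -> injective f ->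
    ~ (forall i j : 'I_n, g (f i) (f j) = cyc_adj i j).

Definition simplicial (g : rel T) (v : T) : Prop :=
  forall x y : T, g v x -> g v y -> x != y -> g x y.

Definition degree (g : rel T) (v : T) : nat := #|[set x | g v x]|.

End Graphs.

From HB Require Import structures.
From mathcomp Require Import all_boot all_order all_algebra.
From mathcomp Require Import lra.
Import Order.TTheory GRing.Theory Num.Theory.
Set Implicit Arguments. Unset Strict Implicit. Unset Printing Implicit Defensive.

(* If a simplicial vertex v had two neighbours x and y, these would be adjacent,
   and deleting the edge xy keeps G t-tough when t <= 1/2, contradicting
   minimality.  Let S be a cutset of G - xy.  If x and y stay connected in
   G - xy - S, the components are those of G - S.  Otherwise v lies in S (it is a
   common neighbour of x and y) and its only neighbours outside S are x and y, so
   putting v back reconnects x and y and merges nothing else: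
   omega(G - xy - S) <= omega(G - (S - v)) + 1.  If S - v is a cutset of G this
   gives t omega(G - xy - S) <= |S| - 1 + t <= |S|; otherwise omega(G - xy - S) <= 2
   and t omega(G - xy - S) <= 1 <= |S|.  Degree 0 is impossible: an isolated vertex
   makes the empty set a cutset, and a single vertex has infinite toughness. *)

Section Components.
Variables (T : finType) (h : rel T).
Hypothesis h_sym : symmetric h.

Definition component (A : {set T}) (a : T) : {set T} :=
  [set z in A | connect (induced h A) a z].

Lemma ncompE A : ncomp h A = #|component A @: A|.
Proof. by []. Qed.

Lemma ncomp_le_card A : ncomp h A <= #|A|.
Proof. exact: leq_imset_card. Qed.

Lemma induced_sym A : symmetric (induced h A).
Proof. by move=> a b; rewrite /induced /= h_sym andbCA. Qed.

Lemma component_eq A a b : connect (induced h A) a b -> component A a = component A b.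
Proof.
move=> ab; apply/setP => z; rewrite !inE; congr (_ && _); apply/idP/idP => az.
- by apply: connect_trans az; rewrite (sym_connect_sym (induced_sym A)).
- exact: connect_trans ab az.
Qed.

Lemma card_imset_le_ncomp (rT : finType) (f : T -> rT) A :
  (forall a b, induced h A a b -> f a = f b) -> #|f @: A| <= ncomp h A.
Proof.
move=> f_edge; have [-> | [a0 _]] := set_0Vmem A; first by rewrite imset0 cards0.
have f_connect a b : connect (induced h A) a b -> f a = f b.
  move=> ab; have f_closed : closed (induced h A) [pred z | f z == f a].
    by move=> z w zw; rewrite !inE (f_edge z w zw).
  by have := closed_connect f_closed ab; rewrite !inE eqxx => /esym/eqP.
pose F (C : {set T}) := f (odflt a0 [pick z in C]).
have sub : f @: A \subset F @: (component A @: A).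
  apply/subsetP => _ /imsetP [a aA ->]; apply/imsetP; exists (component A a).
    exact: imset_f.
  rewrite /F; case: pickP => [z | /(_ a)]; rewrite !inE ?aA ?connect0 //.
  by case/andP=> _ /f_connect.
exact: leq_trans (subset_leq_card sub) (leq_imset_card _ _).
Qed.

Lemma ncomp_le_setU1 (A : {set T}) v x y : v \notin A ->
    (forall z, z \in A -> h v z -> (z == x) || (z == y)) ->
  ncomp h A <= (ncomp h (v |: A)).+1.
Proof.
move=> vA v_nbr; pose c := component A.
(* [lam] labels each vertex of [v |: A] by its component in [A], the components
   of [v], [x] and [y] being identified; it is constant along edges. *)
pose lam z := if (z == v) || (c z == c y) then c x else c z.
have lam_x : lam x = c x by rewrite /lam if_same.
have lam_y : lam y = c x by rewrite /lam eqxx orbT.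
have lam_v w : w \in v |: A -> h v w -> lam v = lam w.
  move=> wA vw; rewrite {1}/lam eqxx.
  have [-> | wv] := eqVneq w v; first by rewrite /lam eqxx.
  by move: wA; rewrite !inE (negbTE wv) => /v_nbr/(_ vw)/orP[]/eqP->.
have lam_edge a b : induced h (v |: A) a b -> lam a = lam b.
  have [-> | av] := eqVneq a v; first by case/and3P=> _ bA; apply: lam_v.
  have [-> | bv] := eqVneq b v.
    by case/and3P=> aA _ ab; rewrite (lam_v a) // h_sym.
  case/and3P; rewrite !inE (negbTE av) (negbTE bv) /= => aA bA ab.
  have ab_c : c a = c b by apply/component_eq/connect1; rewrite /induced /= aA bA.
  by rewrite /lam (negbTE av) (negbTE bv) ab_c.
have sub : c @: A \subset c y |: lam @: (v |: A).
  apply/subsetP => _ /imsetP [a aA ->]; rewrite !inE.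
  case: eqP => //= ay; apply/imsetP; exists a; first by rewrite !inE aA orbT.
  by rewrite /lam (introF eqP ay) orbF; case: eqP => // av; rewrite -av aA in vA.
rewrite ncompE; apply: leq_trans (subset_leq_card sub) _.
by rewrite cardsU1 -add1n leq_add ?leq_b1 ?card_imset_le_ncomp.
Qed.

End Components.

Section DeleteEdge.
Variables (T : finType) (g : rel T) (x y : T).
Hypothesis g_sym : symmetric g.

Local Notation h := (del_edge g x y).

Lemma del_edge_sym : symmetric h.
Proof.
move=> a b; rewrite /del_edge /= g_sym; congr (_ && ~~ _).
by rewrite orbC; congr (_ || _); rewrite andbC.
Qed.

Lemma del_edgeW a b : h a b -> g a b.
Proof. by case/andP. Qed.

Lemma del_edge_other a b : g a b -> a != x -> a != y -> h a b.
Proof. by move=> ab ax ay; rewrite /del_edge /= ab (negbTE ax) (negbTE ay). Qed.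

Lemma ncomp_del_edge (A : {set T}) :
    (x \in A -> y \in A -> connect (induced h A) x y) ->
  ncomp h A = ncomp g A.
Proof.
move=> xy_conn.
have conn_eq : connect (induced g A) =2 connect (induced h A).
  move=> a b; apply/idP/idP; apply: connect_sub => c d; last first.
    by case/and3P=> cA dA /del_edgeW cd; apply: connect1; rewrite /induced /= cA dA.
  case/and3P=> cA dA cd; case hcd: (h c d).
    by apply: connect1; rewrite /induced /= cA dA.
  move: hcd; rewrite /del_edge /= cd => /negbFE/orP[]/andP[/eqP ce /eqP de];
    rewrite ce de in cA dA *; first exact: xy_conn.
  by rewrite (sym_connect_sym (induced_sym del_edge_sym A)) xy_conn.
rewrite !ncompE (@eq_imset _ _ (component h A) (component g A)) // => a.
by apply/setP => z; rewrite !inE conn_eq.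
Qed.

Lemma connect_del_edge_common_nbr (A : {set T}) z :
    z \in A -> x \in A -> y \in A -> z != x -> z != y -> g z x -> g z y ->
  connect (induced h A) x y.
Proof.
move=> zA xA yA zx zy gzx gzy; apply: (@connect_trans _ _ z); apply: connect1.
  by rewrite /induced /= xA zA del_edge_sym del_edge_other.
by rewrite /induced /= zA yA del_edge_other.
Qed.

End DeleteEdge.

Section SimplicialVertex.
Variables (T : finType) (g : rel T) (v x y : T).
Hypotheses (g_sym : symmetric g) (g_irr : irreflexive g).
Hypotheses (v_simp : simplicial g v) (vx : g v x) (vy : g v y).

Local Notation h := (del_edge g x y).

Lemma ncomp_del_edge_separated (S : {set T}) :
    x \in ~: S -> y \in ~: S -> ~~ connect (induced h (~: S)) x y ->
  v \in S /\ ncomp h (~: S) <= (ncomp g (~: (S :\ v))).+1.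
Proof.
move=> xS yS sep.
have v_neq a : g v a -> v != a by apply: contraTneq => <-; rewrite g_irr.
have vS : v \in S.
  apply: contraNT sep; rewrite -in_setC => vS.
  by apply: (connect_del_edge_common_nbr g_sym vS xS yS); rewrite ?v_neq.
split=> //.
have v_nbr z : z \in ~: S -> h v z -> (z == x) || (z == y).
  move=> zS /del_edgeW vz; apply: contraNT sep => /norP [zx zy].
  by apply: (connect_del_edge_common_nbr g_sym zS xS yS zx zy); apply: v_simp.
have -> : ~: (S :\ v) = v |: ~: S.
  by apply/setP => z; rewrite !inE negb_and negbK.
have xy_conn : connect (induced h (v |: ~: S)) x y.
  have vS' := setU11 v (~: S); have xS' := setU1r v xS; have yS' := setU1r v yS.
  have vx' := v_neq x vx; have vy' := v_neq y vy.
  apply: (@connect_trans _ _ v); apply: connect1; rewrite /induced /= vS'.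
    by rewrite xS' del_edge_sym // del_edge_other.
  by rewrite yS' del_edge_other.
rewrite -(ncomp_del_edge g_sym (fun _ _ => xy_conn)).
by apply: ncomp_le_setU1 v_nbr; [exact: del_edge_sym | rewrite inE negbK].
Qed.

Lemma t_tough_del_edge_simplicial (t : rat) :
  (0 < t)%R -> (t <= 1 / 2)%R -> t_tough g t -> t_tough h t.
Proof.
move=> t_gt0 t_le tough S; rewrite /cutset /ncomp_del => S_cut.
have [/and3P [xS yS sep] | conn] :=
  boolP [&& x \in ~: S, y \in ~: S & ~~ connect (induced h (~: S)) x y]; last first.
  rewrite (ncomp_del_edge g_sym) in S_cut * => [|xS yS]; first exact: tough.
  by apply: contraNT conn => sep; rewrite xS yS sep.
have [vS le_c] := ncomp_del_edge_separated xS yS sep.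
have -> : #|S| = #|S :\ v|.+1 by rewrite (cardsD1 v S) vS.
move: le_c S_cut; set c := ncomp h _; set w := ncomp g _ => le_c c_gt1.
have le_cw : (c%:R <= w%:R + 1 :> rat)%R by rewrite natr1 ler_nat.
have tc_le : (t * c%:R <= t * w%:R + t)%R.
  by rewrite -[X in (_ <= _ + X)%R]mulr1 -mulrDr ler_wpM2l // ltW.
rewrite -natr1; case: (ltnP 1 w) => [w_cut | w_le1].
  by have := tough (S :\ v) w_cut; lra.
have le_c2 : (c%:R <= 2 :> rat)%R by rewrite ler_nat (leq_trans le_c).
have := ler_wpM2l (ltW t_gt0) le_c2; have := ler0n rat #|S :\ v|; lra.
Qed.

End SimplicialVertex.

Section Toughness.
Variables (T : finType) (g : rel T).

Lemma cutset_card_gt1 S : cutset g S -> 1 < #|T|.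
Proof.
by move=> S_cut; rewrite (leq_trans S_cut) // (leq_trans (ncomp_le_card _ _)) ?max_card.
Qed.

Lemma toughness_card_gt1 t : (0 < t)%R -> toughness_is g t -> 1 < #|T|.
Proof.
move=> t_gt0 [_ t_max]; rewrite ltnNge; apply/negP => T_le1.
have tough1 : t_tough g (t + 1) by move=> S /cutset_card_gt1; rewrite ltnNge T_le1.
by have := t_max _ (addr_gt0 t_gt0 ltr01) tough1; lra.
Qed.

Lemma cutset0_isolated v w : (forall z, ~~ g v z) -> w != v -> cutset g set0.
Proof.
move=> v_iso wv; apply/card_gt1P.
exists (component g (~: set0) v), (component g (~: set0) w).
split; try by apply: imset_f; rewrite !inE.
apply/negP => /eqP/setP/(_ w).
rewrite !inE connect0 /=.
case/connectP => -[/= _ wE | z p /= /andP [/and3P [_ _ vz]]].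
  by rewrite wE eqxx in wv.
by rewrite (negbTE (v_iso z)) in vz.
Qed.

Lemma toughness_degree_gt0 t v : (0 < t)%R -> toughness_is g t -> 0 < degree g v.
Proof.
move=> t_gt0 tau; rewrite lt0n; apply/negP => /eqP/cards0_eq/setP v_iso.
have v_iso' z : ~~ g v z by have := v_iso z; rewrite !inE => ->.
have [w wv] : exists w, w != v.
  have /card_gt1P [a [b [_ _ ab]]] := toughness_card_gt1 t_gt0 tau.
  by case: (eqVneq a v) => [av | ?]; [exists b; rewrite -av eq_sym | exists a].
have cut := cutset0_isolated v_iso' wv.
have := tau.1 _ cut; rewrite cards0 leNgt mulr_gt0 // ltr0n.
by move: cut; rewrite /cutset => /ltnW.
Qed.

Lemma minimally_tough_del_edge t x y :
  (0 < t)%R -> minimally_tough g t -> g x y -> ~ t_tough (del_edge g x y) t.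
Proof.
move=> t_gt0 [_ t_min] xy tough; have [t' [[_ t'_max] t'_lt]] := t_min x y xy.
by have := t'_max t t_gt0 tough; rewrite leNgt t'_lt.
Qed.

End Toughness.

Theorem mainTheorem3 (T : finType) (g : rel T) (t : rat) :
  simple_graph g -> (0 < t)%R -> (t <= 1 / 2)%R -> chordal g ->
  minimally_tough g t ->
  forall v : T, simplicial g v -> degree g v = 1%N.
Proof.
move=> [g_sym g_irr] t_gt0 t_le _ g_min v v_simp.
have [g_tau _] := g_min; have [g_tough _] := g_tau.
apply/eqP; rewrite eqn_leq (toughness_degree_gt0 v t_gt0 g_tau) andbT leqNgt.
apply/negP => /card_gt1P [x [y []]]; rewrite !inE => vx vy xy.
apply: (minimally_tough_del_edge t_gt0 g_min (v_simp x y vx vy xy)).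
exact: (t_tough_del_edge_simplicial g_sym g_irr v_simp vx vy t_gt0 t_le g_tough).
Qed.
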